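(* Let $(A,C,\mathbb B)$ be a local contact algebra and $\mathfrak u$ a bounded ultrafilter in $A$ (i.e. $\mathfrak u\cap\mathbb B\ne\emptyset$). Then $\{a\in A\mid \forall b\in\mathfrak u: a\,C\,b\}=\{a\in A\mid\forall b\in\mathfrak u: a\,C_{\mathrm{Al}}\,b\}$; that is, $\mathfrak c_{\mathfrak u}=\{a\in A\mid\forall b\in\mathfrak u:\ a\,C\,b\}$.
   Context: A local contact algebra $(A,C,\mathbb B)$ is a Boolean algebra with a contact relation $C$ ($a\,C\,a$ for $a>0$; $a\,C\,b\Rightarrow a,b>0$; symmetric; $a\,C\,(b\vee c)$ iff $a\,C\,b$ or $a\,C\,c$; $a\ll b$ iff not $a\,C\,b^*$) and an ideal $\mathbb B$ of bounded elements with (BC1) $a\ll c$, $a\in\mathbb B\Rightarrow a\ll b\ll c$ for some $b\in\mathbb B$; (BC2) $a\,C\,b\Rightarrow a\,C\,(c\wedge b)$ for some $c\in\mathbb B$; (BC3) each $a\neq0$ has $0\ne b\in\mathbb B$ with $b\ll a$. The Alexandroff extension is $a\,C_{\mathrm{Al}}\,b$ iff ($a\,C\,b$ or $a,b\in A\setminus\mathbb B$); $(A,C_{\mathrm{Al}})$ is a normal contact algebra, and $\mathfrak c_{\mathfrak u}=\{a\in A\mid\forall b\in\mathfrak u: a\,C_{\mathrm{Al}}\,b\}$ is the cluster in $(A,C_{\mathrm{Al}})$ generated by $\mathfrak u$. *)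

From mathcomp Require Import all_boot all_order.
Set Implicit Arguments. Unset Strict Implicit. Unset Printing Implicit Defensive.
Import Order.Theory.
Local Open Scope order_scope.

(* Boolean algebras = complemented distributive lattices with top and bottom
   (ctbDistrLatticeType); a^* is ~` a. *)

Section LCA.
Context {disp : Order.disp_t} {A : ctbDistrLatticeType disp}.

Definition contact_rel (C : A -> A -> Prop) : Prop :=
  [/\ (forall a, \bot < a -> C a a),
      (forall a b, C a b -> \bot < a /\ \bot < b),
      (forall a b, C a b -> C b a) &
      (forall a b c, C a (b `|` c) <-> C a b \/ C a c)].

Definition nontang (C : A -> A -> Prop) (a b : A) : Prop := ~ C a (~` b).

Definition is_ideal (I : A -> Prop) : Prop :=
  [/\ I \bot,
      (forall a b, I b -> a <= b -> I a) &
      (forall a b, I a -> I b -> I (a `|` b))].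

Definition local_contact_algebra (C : A -> A -> Prop) (B : A -> Prop) : Prop :=
  [/\ contact_rel C, is_ideal B,
      (forall a c, nontang C a c -> B a ->
          exists b, B b /\ nontang C a b /\ nontang C b c),
      (forall a b, C a b -> exists c, B c /\ C a (c `&` b)) &
      (forall a, a != \bot -> exists b, B b /\ b != \bot /\ nontang C b a)].

Definition ultrafilter (u : A -> Prop) : Prop :=
  [/\ ~ u \bot, u \top,
      (forall a b, u a -> a <= b -> u b),
      (forall a b, u a -> u b -> u (a `&` b)) &
      (forall a, u a \/ u (~` a))].

Definition C_Al (C : A -> A -> Prop) (B : A -> Prop) (a b : A) : Prop :=
  C a b \/ (~ B a /\ ~ B b).

End LCA.

From mathcomp Require Import all_boot all_order.
Import Order.Theory.
Local Open Scope order_scope.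

Set Implicit Arguments.
Unset Strict Implicit.

(* If [b0] is a bounded member of [u], then every [b] in [u] has the bounded
   member [b `&` b0 <= b] below it; a [C_Al]-contact with a bounded element is
   a [C]-contact, and [C] is monotone, so [a C (b `&` b0)] gives [a C b]. *)

Section LocalContactAlgebra.
Context {disp : Order.disp_t} {A : ctbDistrLatticeType disp}.
Implicit Types (C : A -> A -> Prop) (B : A -> Prop).

Lemma contact_le C a b c : contact_rel C -> C a b -> b <= c -> C a c.
Proof.
case=> _ _ _ CU Cab /join_idPr <-.
by apply/CU; left.
Qed.

Lemma ideal_meetr B b c : is_ideal B -> B c -> B (b `&` c).
Proof. by case=> _ Bdown _ Bc; apply: Bdown Bc _; rewrite leIr. Qed.

Lemma C_Al_boundedr C B a b : B b -> C_Al C B a b -> C a b.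
Proof. by move=> Bb [// | [_ /(_ Bb)]]. Qed.

End LocalContactAlgebra.

Theorem lemma4p3 (disp : Order.disp_t) (A : ctbDistrLatticeType disp)
    (C : A -> A -> Prop) (B : A -> Prop) (u : A -> Prop) :
  local_contact_algebra C B ->
  ultrafilter u ->
  (exists b, u b /\ B b) ->
  forall a : A, (forall b, u b -> C a b) <-> (forall b, u b -> C_Al C B a b).
Proof.
move=> [contactC idealB _ _ _] [_ _ _ uI _] [b0 [ub0 Bb0]] a; split.
  by move=> Ca b ub; left; apply: Ca.
move=> CAl_a b ub.
have Bbb0 : B (b `&` b0) by apply: ideal_meetr.
have Cabb0 : C a (b `&` b0) by apply: C_Al_boundedr (CAl_a _ (uI _ _ ub ub0)).
by apply: contact_le contactC Cabb0 _; rewrite leIl.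
Qed.
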